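(* Let $(P,Q)$ be a quasi-projection pair on a Hilbert $C^*$-module $H$, and let $H_5=\overline{\mathcal{R}(PQ(I-P))}$ and $H_6=\overline{\mathcal{R}((I-P)QP)}$. Then the following are equivalent: (i) $Q=Q^*$; (ii) $H_5=\{0\}$; (iii) $H_6=\{0\}$.
   Context: $H$ is a Hilbert module over a $C^*$-algebra, $\mathcal{L}(H)$ the adjointable operators. A quasi-projection pair is $(P,Q)$ with $P\in\mathcal{L}(H)$ a projection (self-adjoint idempotent), $Q\in\mathcal{L}(H)$ an idempotent, such that $PQ^*P=PQP$, $PQ^*(I-P)=-PQ(I-P)$, $(I-P)Q^*(I-P)=(I-P)Q(I-P)$; equivalently $Q^*=(2P-I)Q(2P-I)$. *)

From HB Require Import structures.
From mathcomp Require Import all_boot all_order all_algebra.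
From mathcomp Require Import complex.
From mathcomp Require Import reals.
Set Implicit Arguments. Unset Strict Implicit. Unset Printing Implicit Defensive.
Import Order.TTheory GRing.Theory Num.Theory.
Local Open Scope ring_scope.
Local Open Scope complex_scope.

Section Hilbert_Cstar.
Variable R : realType.
Local Notation K := R[i].

Definition complete_wrt (V : zmodType) (nV : V -> R) : Prop :=
  forall u : nat -> V,
    (forall e : R, 0 < e -> exists N : nat, forall m n : nat,
        (N <= m)%N -> (N <= n)%N -> nV (u m - u n) < e) ->
    exists l : V, forall e : R, 0 < e -> exists N : nat, forall n : nat,
        (N <= n)%N -> nV (u n - l) < e.

Record is_cstar_algebra (A : lmodType K) (mul : A -> A -> A) (star : A -> A)
    (nA : A -> R) : Prop := {
  cs_mulA : forall a b c, mul a (mul b c) = mul (mul a b) c;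
  cs_mulDl : forall a b c, mul (a + b) c = mul a c + mul b c;
  cs_mulDr : forall a b c, mul a (b + c) = mul a b + mul a c;
  cs_mulZl : forall (k : K) a b, mul (k *: a) b = k *: mul a b;
  cs_mulZr : forall (k : K) a b, mul a (k *: b) = k *: mul a b;
  cs_starK : forall a, star (star a) = a;
  cs_starD : forall a b, star (a + b) = star a + star b;
  cs_starZ : forall (k : K) a, star (k *: a) = k^* *: star a;
  cs_starM : forall a b, star (mul a b) = mul (star b) (star a);
  cs_norm_eq0 : forall a, nA a = 0 -> a = 0;
  cs_normD : forall a b, nA (a + b) <= nA a + nA b;
  cs_normZ : forall (k : K) a, (nA (k *: a))%:C = `|k| * (nA a)%:C;
  cs_normM : forall a b, nA (mul a b) <= nA a * nA b;
  cs_cstar : forall a, nA (mul (star a) a) = nA a ^+ 2;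
  cs_complete : complete_wrt nA
}.

Definition cs_pos (A : lmodType K) (mul : A -> A -> A) (star : A -> A) (a : A)
  : Prop := exists b, a = mul (star b) b.

Definition hnorm (A H : lmodType K) (nA : A -> R) (ip : H -> H -> A) (x : H) : R :=
  Num.sqrt (nA (ip x x)).

Record is_hilbert_module (A : lmodType K) (mul : A -> A -> A) (star : A -> A)
    (nA : A -> R) (H : lmodType K) (act : H -> A -> H) (ip : H -> H -> A)
    : Prop := {
  hm_actA : forall x a b, act (act x a) b = act x (mul a b);
  hm_actDl : forall x y a, act (x + y) a = act x a + act y a;
  hm_actDr : forall x a b, act x (a + b) = act x a + act x b;
  hm_actZl : forall (k : K) x a, act (k *: x) a = k *: act x a;
  hm_actZr : forall (k : K) x a, act x (k *: a) = k *: act x a;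
  hm_ipD : forall x y z, ip x (y + z) = ip x y + ip x z;
  hm_ipZ : forall (k : K) x y, ip x (k *: y) = k *: ip x y;
  hm_ipA : forall x y a, ip x (act y a) = mul (ip x y) a;
  hm_ipC : forall x y, star (ip x y) = ip y x;
  hm_ip_pos : forall x, cs_pos mul star (ip x x);
  hm_ip_def : forall x, ip x x = 0 -> x = 0;
  hm_complete : complete_wrt (hnorm nA ip)
}.

Definition adjointable (A H : lmodType K) (ip : H -> H -> A) (T Ts : H -> H) : Prop :=
  forall x y, ip (T x) y = ip x (Ts y).

Definition compl_op (H : lmodType K) (T : H -> H) : H -> H := fun x => x - T x.

Definition quasi_projection_pair (A H : lmodType K) (ip : H -> H -> A)
    (P Q Qs : H -> H) : Prop :=
  [/\ adjointable ip P P, P \o P =1 P,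
      adjointable ip Q Qs, Q \o Q =1 Q &
      [/\ P \o Qs \o P =1 P \o Q \o P,
          P \o Qs \o compl_op P =1 (fun x => - (P \o Q \o compl_op P) x) &
          compl_op P \o Qs \o compl_op P =1 compl_op P \o Q \o compl_op P]].

Definition closure_range (H : lmodType K) (nH : H -> R) (T : H -> H) : H -> Prop :=
  fun y => forall e : R, 0 < e -> exists x, nH (T x - y) < e.

Definition is_zero_set (H : lmodType K) (S : H -> Prop) : Prop :=
  forall y, S y <-> y = 0.

End Hilbert_Cstar.

From HB Require Import structures.
From mathcomp Require Import all_boot all_order all_algebra.
From mathcomp Require Import complex.
From mathcomp Require Import reals.
Import Order.TTheory GRing.Theory Num.Theory.
Set Implicit Arguments. Unset Strict Implicit. Unset Printing Implicit Defensive.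
Local Open Scope ring_scope.
Local Open Scope complex_scope.

(* The quasi-projection identities say that, in the block decomposition
   relative to P, the operator Q^* has the same diagonal blocks as Q and the
   opposite upper-right block: P Q^* (I-P) = - P Q (I-P).  Since the
   lower-left block (I-P) Q P is the adjoint of P Q^* (I-P), both off-diagonal
   blocks of Q vanish as soon as one of them does, and then Q and Q^* agree
   block by block.  Conversely Q = Q^* forces P Q (I-P) = - P Q (I-P) = 0.
   Finally, the closure of the range of an operator is {0} exactly when the
   operator is zero, because the norm of a Hilbert C*-module is definite. *)

Lemma eq_opp_eq0 (F : numFieldType) (V : lmodType F) (v : V) : v = - v -> v = 0.
Proof.
move=> v_opp; have /eqP : (2 : F) *: v = 0.
  by rewrite scaler_nat mulr2n {1}v_opp addNr.
by rewrite scaler_eq0 pnatr_eq0 => /eqP.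
Qed.

Section HilbertModule.
Variable R : realType.
Variables (A : lmodType R[i]) (mul : A -> A -> A) (star : A -> A) (nA : A -> R).
Variables (H : lmodType R[i]) (act : H -> A -> H) (ip : H -> H -> A).
Hypothesis hA : is_cstar_algebra mul star nA.
Hypothesis hH : is_hilbert_module mul star nA act ip.

Lemma star0 : star 0 = 0.
Proof. by rewrite -(scale0r (0 : A)) (cs_starZ hA) conjC0 !scale0r. Qed.

Lemma starN a : star (- a) = - star a.
Proof. by rewrite -scaleN1r (cs_starZ hA) rmorphN1 scaleN1r. Qed.

Lemma ip0r x : ip x 0 = 0.
Proof. by rewrite -(scale0r (0 : H)) (hm_ipZ hH) scale0r. Qed.

Lemma ip0l x : ip 0 x = 0.
Proof. by rewrite -(hm_ipC hH) ip0r star0. Qed.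

Lemma ipNr x y : ip x (- y) = - ip x y.
Proof. by rewrite -scaleN1r (hm_ipZ hH) scaleN1r. Qed.

Lemma ipNl x y : ip (- x) y = - ip x y.
Proof. by rewrite -(hm_ipC hH) ipNr starN (hm_ipC hH). Qed.

Lemma ipDl x y z : ip (x + y) z = ip x z + ip y z.
Proof. by rewrite -(hm_ipC hH) (hm_ipD hH) (cs_starD hA) !(hm_ipC hH). Qed.

Lemma ipBl x y z : ip (x - y) z = ip x z - ip y z.
Proof. by rewrite ipDl ipNl. Qed.

Lemma ip_injl u v : (forall w, ip u w = ip v w) -> u = v.
Proof.
move=> eq_ip; apply/eqP; rewrite -subr_eq0; apply/eqP.
by apply: (hm_ip_def hH); rewrite ipBl eq_ip subrr.
Qed.

Lemma nA0 : nA 0 = 0.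
Proof.
by apply: complexI; rewrite -(scale0r (0 : A)) (cs_normZ hA) normr0 mul0r.
Qed.

Lemma nAN a : nA (- a) = nA a.
Proof. by apply: complexI; rewrite -scaleN1r (cs_normZ hA) normrN1 mul1r. Qed.

Lemma nA_ge0 a : 0 <= nA a.
Proof.
have := cs_normD hA a (- a); rewrite subrr nA0 nAN -mulr2n => le0_2n.
by rewrite -(pmulrn_lge0 _ (ltn0Sn 1)).
Qed.

Local Notation hnorm := (hnorm nA ip).

Lemma hnorm0 : hnorm 0 = 0.
Proof. by rewrite /hnorm ip0r nA0 sqrtr0. Qed.

Lemma hnormN x : hnorm (- x) = hnorm x.
Proof. by rewrite /hnorm ipNl ipNr opprK. Qed.

Lemma hnorm_eq0 x : hnorm x = 0 -> x = 0.
Proof.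
rewrite /hnorm => /eqP; rewrite sqrtr_eq0 => le_n0.
apply: (hm_ip_def hH); apply: (cs_norm_eq0 hA).
by apply/eqP; rewrite eq_le le_n0 nA_ge0.
Qed.

Lemma closure_range_eq0 (T : H -> H) : T 0 = 0 ->
  is_zero_set (closure_range hnorm T) <-> T =1 (fun=> 0).
Proof.
move=> T0; split=> [zero_cl x | T_eq0 y].
  by apply/(zero_cl (T x)) => e e_gt0; exists x; rewrite subrr hnorm0.
split=> [y_cl | ->]; last by move=> e e_gt0; exists 0; rewrite T0 subrr hnorm0.
apply: hnorm_eq0; apply/eqP; rewrite eq_le sqrtr_ge0 andbT leNgt.
by apply/negP => /y_cl [x]; rewrite T_eq0 sub0r hnormN ltxx.
Qed.

Section Adjointable.
Variables T Ts : H -> H.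
Hypothesis hT : adjointable ip T Ts.

Lemma adjointableD x y : T (x + y) = T x + T y.
Proof. by apply: ip_injl => w; rewrite hT !ipDl !hT. Qed.

Lemma adjointable0 : T 0 = 0.
Proof. by apply: ip_injl => w; rewrite hT !ip0l. Qed.

Lemma adjointable_sym : adjointable ip Ts T.
Proof. by move=> x y; rewrite -(hm_ipC hH) -hT (hm_ipC hH). Qed.

Lemma adjointable_eq0 : T =1 (fun=> 0) -> Ts =1 (fun=> 0).
Proof.
by move=> T_eq0 y; apply: ip_injl => w; rewrite adjointable_sym T_eq0 ip0l ip0r.
Qed.

Lemma block_decomposition (P : H -> H) x :
  T x = (P \o T \o P) x + (P \o T \o compl_op P) x
      + ((compl_op P \o T \o P) x + (compl_op P \o T \o compl_op P) x).
Proof.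
have split_compl y : y = P y + compl_op P y by rewrite /compl_op addrC subrK.
by rewrite /= addrACA -!split_compl -adjointableD -split_compl.
Qed.

End Adjointable.

Lemma adjointable_compl P : adjointable ip P P ->
  adjointable ip (compl_op P) (compl_op P).
Proof. by move=> hP x y; rewrite /compl_op ipBl (hm_ipD hH) ipNr hP. Qed.

Section QuasiProjectionPair.
Variables P Q Qs : H -> H.
Hypotheses (hP : adjointable ip P P) (hQ : adjointable ip Q Qs).
Hypothesis QsPP : P \o Qs \o P =1 P \o Q \o P.
Hypothesis QsPC : P \o Qs \o compl_op P =1 (fun x => - (P \o Q \o compl_op P) x).
Hypothesis QsCC : compl_op P \o Qs \o compl_op P =1 compl_op P \o Q \o compl_op P.

Lemma adjointable_upper_right :
  adjointable ip (P \o Q \o compl_op P) (compl_op P \o Qs \o P).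
Proof. by move=> x y /=; rewrite hP hQ (adjointable_compl hP). Qed.

Lemma adjointable_lower_left :
  adjointable ip (compl_op P \o Q \o P) (P \o Qs \o compl_op P).
Proof. by move=> x y /=; rewrite (adjointable_compl hP) hQ hP. Qed.

Lemma lower_left_eq0E :
  (compl_op P \o Q \o P) =1 (fun=> 0) <-> (P \o Q \o compl_op P) =1 (fun=> 0).
Proof.
split=> [LL_eq0 x | UR_eq0].
  by apply/eqP; rewrite -oppr_eq0 -QsPC (adjointable_eq0 adjointable_lower_left).
apply: (adjointable_eq0 (adjointable_sym adjointable_lower_left)) => x.
by rewrite QsPC UR_eq0 oppr0.
Qed.

Lemma selfadjointE : Q =1 Qs <-> (P \o Q \o compl_op P) =1 (fun=> 0).
Proof.
split=> [Q_Qs x | UR_eq0 x].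
  by apply: eq_opp_eq0; rewrite -QsPC /= -Q_Qs.
have LL_eq0 := proj2 lower_left_eq0E UR_eq0.
have LLs_eq0 := adjointable_eq0 adjointable_upper_right UR_eq0.
rewrite (block_decomposition hQ P) (block_decomposition (adjointable_sym hQ) P).
by rewrite (QsPP x) (QsPC x) (QsCC x) (LLs_eq0 x) (UR_eq0 x) (LL_eq0 x) oppr0.
Qed.

End QuasiProjectionPair.

End HilbertModule.

Theorem lemma2p12 (R : realType) (A : lmodType R[i]) (mul : A -> A -> A)
    (star : A -> A) (nA : A -> R) (H : lmodType R[i]) (act : H -> A -> H)
    (ip : H -> H -> A) (P Q Qs : H -> H) :
  is_cstar_algebra mul star nA ->
  is_hilbert_module mul star nA act ip ->
  quasi_projection_pair ip P Q Qs ->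
  let H5 := closure_range (hnorm nA ip) (P \o Q \o compl_op P) in
  let H6 := closure_range (hnorm nA ip) (compl_op P \o Q \o P) in
  ((Q =1 Qs) <-> is_zero_set H5) /\ (is_zero_set H5 <-> is_zero_set H6).
Proof.
move=> hA hH [hP _ hQ _ [QsPP QsPC QsCC]] H5 H6.
have UR := adjointable_upper_right hA hH hP hQ.
have LL := adjointable_lower_left hA hH hP hQ.
rewrite /H5 /H6 (closure_range_eq0 hA hH (adjointable0 hA hH UR))
  (closure_range_eq0 hA hH (adjointable0 hA hH LL)).
split; first exact: (selfadjointE hA hH hP hQ QsPP QsPC QsCC).
by symmetry; exact: (lower_left_eq0E hA hH hP hQ QsPC).
Qed.
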